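(* Let $a\in(\frac12,\frac23]$. Define \[ d_n=\begin{cases} t_1, & n=0,\\ \min\big\{\frac{t_1+1}{1},\dots,\frac{t_n+1}{n},\frac{t_{n+1}}{n+1}\big\}, & 1\le n<\sigma_a,\\ \min\big\{\frac{t_1+1}{1},\dots,\frac{t_n+1}{n}\big\}, & n=\sigma_a<\infty.\end{cases} \] Then for any $x\in[0,1)$ and integers $k,n$ with $0\le n\le\sigma_a$ and $0\le k\le\sigma_a(x)$ we have $d_n\ge t_1$ and \[ t_k(x)\ge k\,d_n-\mathbb 1\{n\neq0\}. \]
   Context: For $a\in[\frac12,\frac23]$ let $I_a=\big(\frac{2a-1}{1-a},1\big)$ and define $T_a$ on $[0,\frac1{1-a}]\setminus I_a$ by $T_a(x)=\frac1a(x+1)$ for $0\le x\le\frac{2a-1}{1-a}$ and $T_a(x)=\frac1a(x-1)$ for $1\le x\le\frac1{1-a}$; for $a=\frac23$ set $T_{2/3}(1)=0$. Let $\varkappa_a(x)=\inf\{k\ge0:T_a^k(x)\in I_a\}$ ($\inf\emptyset=\infty$). Let $\sigma_a(x)=\sum_{n=1}^{\varkappa_a(x)}\mathbb 1\{T_a^n(x)<1\}$ (the number of returns to $[0,1)$), $t_0(x)=0$ and $t_k(x)=\inf\{n>t_{k-1}(x):T_a^n(x)<1\}$ for $1\le k<\sigma_a(x)+1$ (the return times). Write $\sigma_a=\sigma_a(0)$ and $t_k=t_k(0)$. *)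

From Stdlib Require Import Reals Lra Lia List Arith.
From Stdlib Require Import ClassicalEpsilon ClassicalDescription.
Open Scope R_scope.

Definition inI (a y : R) : Prop := (2*a - 1)/(1 - a) < y /\ y < 1.

(* T_a, made total: on the domain [0,1/(1-a)] \ I_a this agrees with the
   paper's map (branch (x+1)/a for 0 <= x <= (2a-1)/(1-a) < 1 ... and
   (x-1)/a for 1 <= x <= 1/(1-a)), including T_{2/3}(1) = 0. *)
Definition T (a x : R) : R :=
  if Rlt_dec x 1 then (x + 1) / a else (x - 1) / a.

Fixpoint Tn (a : R) (n : nat) (x : R) : R :=
  match n with
  | O => x
  | S m => T a (Tn a m x)
  end.

Fixpoint count_ret (a x : R) (N : nat) : nat :=
  match N with
  | O => O
  | S M => (count_ret a x M + (if Rlt_dec (Tn a (S M) x) 1 then 1 else 0))%nat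
  end.

(* "N <= kappa_a(x)": the orbit does not enter I_a at any time m < N
   (kappa_a(x) = inf{k >= 0 : T_a^k x in I_a}, possibly infinite). *)
Definition before_kappa (a x : R) (N : nat) : Prop :=
  forall m : nat, (m < N)%nat -> ~ inI a (Tn a m x).

(* "k <= sigma_a(x)" where sigma_a(x) = sum_{n=1}^{kappa_a(x)} 1{T_a^n x < 1}
   in N u {oo}: some finite partial sum up to N <= kappa_a(x) reaches k. *)
Definition sigma_ge (a x : R) (k : nat) : Prop :=
  exists N : nat, before_kappa a x N /\ (k <= count_ret a x N)%nat.

Definition sigma_eq (a x : R) (s : nat) : Prop :=
  sigma_ge a x s /\ ~ sigma_ge a x (S s).

(* return times: t_0(x) = 0, t_k(x) = inf{n > t_{k-1}(x) : T_a^n x < 1}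
   (the least such n, chosen by the epsilon operator; meaningful for
   k <= sigma_a(x), which is the only range where it is used). *)
Fixpoint t (a x : R) (k : nat) : nat :=
  match k with
  | O => O
  | S k' =>
      let p := t a x k' in
      epsilon (inhabits O)
        (fun n : nat => (p < n)%nat /\ Tn a n x < 1 /\
           forall m : nat, (p < m)%nat -> (m < n)%nat -> ~ (Tn a m x < 1))
  end.

Definition minl (d : R) (l : list R) : R := fold_right Rmin d l.

(* d_n, built from t_j = t_j(0) *)
Definition d (a : R) (n : nat) : R :=
  let tt j := INR (t a 0 j) in
  let terms := map (fun j => (tt j + 1) / INR j) (seq 1 n) in
  match n with
  | O => tt 1%nat
  | S _ =>
      if excluded_middle_informative (sigma_ge a 0 (S n))
      then (* 1 <= n < sigma_a *) minl (tt (S n) / INR (S n)) terms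
      else (* n = sigma_a < oo *) minl ((tt 1%nat + 1) / 1) terms
  end.

(* Both branches of T_a are increasing, so for
   0 <= x the orbits stay ordered, T^m 0 <= T^m x, until the first time
   the orbit of 0 returns to [0,1) while that of x does not; before that
   time they return together, and 0 avoids the gap I_a whenever x does.
   Hence either t_i(x) = t_i(0), or t_j(0) < t_j(x) for some j <= i.
   Taking i = min(k, n+1), the definition of d_n yields either
   t_k(x) >= k d_n - 1 directly or some r <= k with t_r(x) >= r d_n;
   in the latter case restart the orbit at T^{t_r(x)} x, which lies in
   [0,1), and conclude by strong induction on k. *)

From Stdlib Require Import Reals Lra Lia List Arith Wf_nat.
From Stdlib Require Import ClassicalEpsilon ClassicalDescription.
Open Scope R_scope.

Lemma least_witness (P : nat -> Prop) n : P n ->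
  exists m, P m /\ (m <= n)%nat /\ forall q, (q < m)%nat -> ~ P q.
Proof.
  intros Hn.
  destruct (dec_inh_nat_subset_has_unique_least_element P (fun q => classic (P q))
              (ex_intro _ n Hn)) as (m & (Hm & Hmin) & _).
  exists m; repeat split; [exact Hm | exact (Hmin n Hn) |].
  intros q Hq HPq. specialize (Hmin q HPq). lia.
Qed.

Lemma Rle_div_iff b p q : 0 < q -> (b <= p / q <-> q * b <= p).
Proof.
  intros Hq. split; intros H.
  - replace p with (q * (p / q)) by (field; lra). apply Rmult_le_compat_l; lra.
  - apply Rmult_le_reg_l with q; [exact Hq|].
    replace (q * (p / q)) with p by (field; lra). exact H.
Qed.

Section Orbits.

Variable a : R.

Lemma Tn_add m j x : Tn a (m + j) x = Tn a j (Tn a m x).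
Proof.
  induction j as [|j IH]; cbn [Tn].
  - now rewrite Nat.add_0_r.
  - now rewrite Nat.add_succ_r, <- IH.
Qed.

Lemma count_ret_at_return x m :
  Tn a (S m) x < 1 -> count_ret a x (S m) = S (count_ret a x m).
Proof. intros Hr. cbn [count_ret]. destruct Rlt_dec; [lia | contradiction]. Qed.

Lemma count_ret_at_non_return x m :
  ~ Tn a (S m) x < 1 -> count_ret a x (S m) = count_ret a x m.
Proof. intros Hr. cbn [count_ret]. destruct Rlt_dec; [contradiction | lia]. Qed.

Lemma count_ret_add x m j :
  count_ret a x (m + j) = (count_ret a x m + count_ret a (Tn a m x) j)%nat.
Proof.
  induction j as [|j IH]; cbn [count_ret].
  - now rewrite Nat.add_0_r.
  - rewrite Nat.add_succ_r. cbn [count_ret]. rewrite IH, <- Tn_add, Nat.add_succ_r.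
    destruct Rlt_dec; lia.
Qed.

Lemma count_ret_mono x M N : (M <= N)%nat -> (count_ret a x M <= count_ret a x N)%nat.
Proof. induction 1; cbn [count_ret]; [lia | destruct Rlt_dec; lia]. Qed.

Lemma no_return_between x p q m :
  (count_ret a x q <= count_ret a x p)%nat -> (p < m <= q)%nat -> ~ Tn a m x < 1.
Proof.
  intros Hc Hm Hr. destruct m as [|m]; [lia|].
  pose proof (count_ret_mono x p m ltac:(lia)).
  pose proof (count_ret_mono x (S m) q ltac:(lia)).
  rewrite count_ret_at_return in * by exact Hr. lia.
Qed.

Lemma count_ret_reached x N k : (1 <= k <= count_ret a x N)%nat ->
  exists m, (m <= N)%nat /\ Tn a m x < 1 /\ count_ret a x m = k.
Proof.
  induction N as [|N IH]; intros Hk; cbn [count_ret] in Hk; [lia|].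
  destruct (le_lt_dec k (count_ret a x N)) as [HkN|HkN].
  - destruct (IH ltac:(lia)) as (m & HmN & Hm). exists m; split; [lia | exact Hm].
  - destruct (Rlt_dec (Tn a (S N) x) 1) as [Hr|Hr]; [|lia].
    exists (S N); repeat split; [lia | exact Hr |].
    rewrite count_ret_at_return by exact Hr. lia.
Qed.

Lemma t_S_eq x k m : (t a x k < m)%nat -> Tn a m x < 1 ->
  (forall q, (t a x k < q)%nat -> (q < m)%nat -> ~ Tn a q x < 1) ->
  t a x (S k) = m.
Proof.
  intros Hlt Hr Hgap. cbn [t].
  lazymatch goal with |- epsilon _ ?P = _ =>
    destruct (epsilon_spec (inhabits O) P (ex_intro _ m (conj Hlt (conj Hr Hgap))))
      as (He & Hre & Hgape); set (e := epsilon (inhabits O) P) in * end.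
  destruct (Nat.lt_total e m) as [Hem|[Hem|Hem]].
  - exfalso. exact (Hgap e He Hem Hre).
  - exact Hem.
  - exfalso. exact (Hgape m Hlt Hem Hr).
Qed.

Lemma t_of_return x k m :
  Tn a m x < 1 -> count_ret a x m = S k -> t a x (S k) = m.
Proof.
  revert m; induction k as [|k IH]; intros m Hr Hc;
    (destruct m as [|m]; [discriminate|]);
    rewrite count_ret_at_return in Hc by exact Hr; injection Hc as Hc.
  - apply t_S_eq; [cbn; lia | exact Hr |].
    intros q Hq Hqm. apply (no_return_between x 0 m); cbn [count_ret]; lia.
  - destruct (count_ret_reached x m (S k)) as (p & Hpm & Hp & Hcp); [lia|].
    pose proof (IH p Hp Hcp) as Htp.
    apply t_S_eq; [lia | exact Hr |].
    intros q Hq Hqm. apply (no_return_between x p m); lia.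
Qed.

Lemma t_spec_of_count x N k : (1 <= k <= count_ret a x N)%nat ->
  (t a x k <= N)%nat /\ Tn a (t a x k) x < 1 /\ count_ret a x (t a x k) = k.
Proof.
  intros Hk. destruct (count_ret_reached x N k Hk) as (m & HmN & Hm & Hcm).
  destruct k as [|k]; [lia|]. rewrite (t_of_return x k m Hm Hcm). auto.
Qed.

Lemma t_shift x m q i : (1 <= i <= count_ret a (Tn a m x) q)%nat ->
  t a x (count_ret a x m + i) = (m + t a (Tn a m x) i)%nat.
Proof.
  intros Hi. destruct (t_spec_of_count (Tn a m x) q i Hi) as (_ & Hr & Hc).
  destruct i as [|i]; [lia|]. rewrite Nat.add_succ_r.
  apply t_of_return; [now rewrite Tn_add | now rewrite count_ret_add, Hc].
Qed.

Lemma sigma_ge_0 x : sigma_ge a x 0.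
Proof. exists O. split; [intros m Hm; lia | lia]. Qed.

Lemma sigma_ge_le x j k : sigma_ge a x k -> (j <= k)%nat -> sigma_ge a x j.
Proof. intros (N & HN & Hk) Hjk. exists N. split; [exact HN | lia]. Qed.

Lemma sigma_ge_shift x N m : before_kappa a x N -> (m <= N)%nat ->
  sigma_ge a (Tn a m x) (count_ret a x N - count_ret a x m).
Proof.
  intros HN Hm. exists (N - m)%nat. split.
  - intros q Hq. rewrite <- Tn_add. apply HN. lia.
  - pose proof (count_ret_add x m (N - m)) as Hadd.
    replace (m + (N - m))%nat with N in Hadd by lia. lia.
Qed.

Hypothesis a_pos : 0 < a.

Lemma Tn_nonneg m x : 0 <= x -> 0 <= Tn a m x.
Proof.
  intros Hx. induction m as [|m IH]; cbn [Tn]; [exact Hx|].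
  unfold T, Rdiv. pose proof (Rinv_0_lt_compat a a_pos).
  destruct Rlt_dec; apply Rmult_le_pos; lra.
Qed.

Lemma T_le u v : u <= v -> (u < 1 -> v < 1) -> T a u <= T a v.
Proof.
  intros Huv Hbranch. unfold T, Rdiv. pose proof (Rinv_0_lt_compat a a_pos).
  destruct (Rlt_dec u 1), (Rlt_dec v 1); [| exfalso; auto | |];
    apply Rmult_le_compat_r; lra.
Qed.

Lemma return_time_restart x N r k : 0 <= x -> before_kappa a x N ->
  (1 <= r < k)%nat -> (k <= count_ret a x N)%nat ->
  let y := Tn a (t a x r) x in
  0 <= y < 1 /\ sigma_ge a y (k - r) /\ t a x k = (t a x r + t a y (k - r))%nat.
Proof.
  intros Hx HN Hr Hk y. destruct (t_spec_of_count x N r ltac:(lia)) as (HmN & Hret & Hc).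
  subst y; set (m := t a x r) in *.
  pose proof (sigma_ge_shift x N m HN HmN) as Hsig. rewrite Hc in Hsig.
  split; [split; [apply Tn_nonneg; exact Hx | exact Hret] | split].
  - apply (sigma_ge_le _ _ _ Hsig). lia.
  - pose proof (count_ret_add x m (N - m)) as Hadd.
    replace (m + (N - m))%nat with N in Hadd by lia.
    replace k with (count_ret a x m + (k - r))%nat at 1 by lia.
    apply (t_shift x m (N - m)). lia.
Qed.

Definition split_at x y m := Tn a m x < 1 /\ ~ Tn a m y < 1.

Lemma Tn_le_before_split x y m : x <= y ->
  (forall q, (q < m)%nat -> ~ split_at x y q) -> Tn a m x <= Tn a m y.
Proof.
  intros Hxy. induction m as [|m IH]; intros Hns; cbn [Tn]; [exact Hxy|].
  apply T_le.
  - apply IH. intros q Hq. apply Hns. lia.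
  - intros Hrx. destruct (Rlt_dec (Tn a m y) 1) as [Hry|Hry]; [exact Hry|].
    exfalso. exact (Hns m (Nat.lt_succ_diag_r m) (conj Hrx Hry)).
Qed.

Lemma count_ret_eq_before_split x y m : x <= y ->
  (forall q, (q <= m)%nat -> ~ split_at x y q) -> count_ret a y m = count_ret a x m.
Proof.
  intros Hxy. induction m as [|m IH]; intros Hns; [reflexivity|].
  cbn [count_ret]. rewrite IH by (intros q Hq; apply Hns; lia).
  pose proof (Tn_le_before_split x y (S m) Hxy (fun q Hq => Hns q ltac:(lia))).
  specialize (Hns (S m) (le_n _)). unfold split_at in Hns.
  destruct (Rlt_dec (Tn a (S m) y) 1), (Rlt_dec (Tn a (S m) x) 1); lia || lra || tauto.
Qed.

Lemma before_kappa_before_split x y N : x <= y ->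
  (forall q, (q < N)%nat -> ~ split_at x y q) -> before_kappa a y N -> before_kappa a x N.
Proof.
  intros Hxy Hns Hy q Hq [Hlo Hhi]. apply (Hns q Hq). split; [exact Hhi|].
  intros Hyq. apply (Hy q Hq).
  pose proof (Tn_le_before_split x y q Hxy (fun p Hp => Hns p ltac:(lia))).
  split; lra.
Qed.

Lemma return_time_eq_of_no_split x y N i : x <= y -> before_kappa a y N ->
  (1 <= i <= count_ret a y N)%nat ->
  (forall q, (q <= t a y i)%nat -> ~ split_at x y q) ->
  t a x i = t a y i /\ sigma_ge a x i.
Proof.
  intros Hxy HN Hi Hns. destruct (t_spec_of_count y N i Hi) as (HmN & Hr & Hc).
  set (m := t a y i) in *.
  assert (Hcx : count_ret a x m = i)
    by (rewrite <- (count_ret_eq_before_split x y m Hxy Hns); exact Hc).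
  split.
  - destruct i as [|i]; [lia|]. apply t_of_return; [|exact Hcx].
    pose proof (Tn_le_before_split x y m Hxy (fun q Hq => Hns q ltac:(lia))). lra.
  - exists m. split; [|lia].
    apply (before_kappa_before_split x y m Hxy); [intros q Hq; apply Hns; lia|].
    intros q Hq. apply HN. lia.
Qed.

Lemma return_time_lt_at_first_split x y N i p : x <= y -> before_kappa a y N ->
  (1 <= i <= count_ret a y N)%nat ->
  split_at x y (S p) -> (S p <= t a y i)%nat ->
  (forall q, (q < S p)%nat -> ~ split_at x y q) ->
  exists j, (1 <= j <= i)%nat /\ sigma_ge a x j /\ (t a x j < t a y j)%nat.
Proof.
  intros Hxy HN Hi [Hrx Hry] Hpi Hns.
  destruct (t_spec_of_count y N i Hi) as (HiN & Hri & Hci).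
  assert (Hcp : count_ret a y p = count_ret a x p)
    by (apply count_ret_eq_before_split; [exact Hxy | intros q Hq; apply Hns; lia]).
  pose proof (count_ret_at_return x p Hrx) as Hcx.
  pose proof (count_ret_at_non_return y p Hry) as Hcy.
  assert (Hpi' : (S p < t a y i)%nat)
    by (destruct (Nat.eq_dec (S p) (t a y i)) as [E|]; [rewrite E in Hry; contradiction | lia]).
  assert (Hji : (count_ret a y (S p) < i)%nat).
  { destruct (le_lt_dec i (count_ret a y (S p))) as [Hle|Hlt]; [|exact Hlt].
    exfalso. apply (no_return_between y (S p) (t a y i) (t a y i)); [lia | lia | exact Hri]. }
  exists (S (count_ret a x p)). split; [lia | split].
  - exists (S p). split; [|lia].
    apply (before_kappa_before_split x y _ Hxy Hns). intros q Hq. apply HN. lia.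
  - rewrite (t_of_return x _ (S p) Hrx Hcx).
    destruct (t_spec_of_count y N (S (count_ret a x p)) ltac:(lia)) as (_ & _ & Hcj).
    destruct (le_lt_dec (t a y (S (count_ret a x p))) (S p)) as [Hle|Hlt]; [|exact Hlt].
    pose proof (count_ret_mono y _ _ Hle). lia.
Qed.

Lemma return_time_lower_cases x y N i : x <= y -> y < 1 -> before_kappa a y N ->
  (1 <= i <= count_ret a y N)%nat ->
  (t a x i = t a y i /\ sigma_ge a x i) \/
  exists j, (1 <= j <= i)%nat /\ sigma_ge a x j /\ (t a x j < t a y j)%nat.
Proof.
  intros Hxy Hy HN Hi.
  destruct (classic (exists q, (q <= t a y i)%nat /\ split_at x y q))
    as [(q & Hqi & Hq) | Hns].
  - right. destruct (least_witness (split_at x y) q Hq) as (p & Hp & Hpq & Hmin).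
    destruct p as [|p]; [destruct Hp as [_ Hy0]; cbn in Hy0; contradiction|].
    apply (return_time_lt_at_first_split x y N i p); auto. lia.
  - left. apply (return_time_eq_of_no_split x y N i Hxy HN Hi).
    intros q Hq Hsq. apply Hns. eauto.
Qed.

Lemma return_time_lower_bound D c n : 0 <= c <= 1 ->
  (forall j, (1 <= j <= n)%nat -> INR j * D <= INR (t a 0 j) + c) ->
  (sigma_ge a 0 (S n) -> INR (S n) * D <= INR (t a 0 (S n))) ->
  forall k x, 0 <= x < 1 -> sigma_ge a x k -> INR k * D - c <= INR (t a x k).
Proof.
  intros Hc Hle Hlast k.
  induction k as [k IH] using (well_founded_induction lt_wf).
  intros x Hx (N & HN & Hk).
  destruct (Nat.eq_dec k 0) as [->|Hk0]; [cbn; lra|].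
  assert (Hrestart : forall r, (1 <= r <= k)%nat -> INR r * D <= INR (t a x r) ->
                              INR k * D - c <= INR (t a x k)).
  { intros r Hr HrD. destruct (Nat.eq_dec r k) as [->|Hrk]; [lra|].
    destruct (return_time_restart x N r k) as (Hy & Hsy & ->); [lra | exact HN | lia | lia |].
    pose proof (IH (k - r)%nat ltac:(lia) _ Hy Hsy) as Hy_bound.
    rewrite minus_INR in Hy_bound by lia. rewrite plus_INR. nra. }
  destruct (return_time_lower_cases 0 x N (Nat.min k (S n))) as [[Heq Hs] | (j & Hj & Hsj & Hlt)];
    [lra | lra | exact HN | lia | |].
  - destruct (le_lt_dec k n) as [Hkn|Hnk].
    + replace (Nat.min k (S n)) with k in * by lia.
      rewrite <- Heq. pose proof (Hle k ltac:(lia)). lra.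
    + replace (Nat.min k (S n)) with (S n) in * by lia.
      apply (Hrestart (S n)); [lia|]. rewrite <- Heq. exact (Hlast Hs).
  - apply (Hrestart j); [lia|].
    apply le_INR in Hlt. rewrite S_INR in Hlt.
    destruct (Nat.eq_dec j (S n)) as [->|Hjn].
    + pose proof (Hlast Hsj). lra.
    + pose proof (Hle j ltac:(lia)). lra.
Qed.

End Orbits.

Lemma minl_le_default d0 l : minl d0 l <= d0.
Proof.
  induction l as [|y l IH]; cbn; [lra|]. eapply Rle_trans; [apply Rmin_r | exact IH].
Qed.

Lemma minl_le_In d0 l y : In y l -> minl d0 l <= y.
Proof.
  induction l as [|z l IH]; cbn; [tauto|]. intros [->|Hy].
  - apply Rmin_l.
  - eapply Rle_trans; [apply Rmin_r | exact (IH Hy)].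
Qed.

Lemma le_minl d0 l b : b <= d0 -> (forall y, In y l -> b <= y) -> b <= minl d0 l.
Proof.
  intros Hd Hl. induction l as [|y l IH]; cbn; [exact Hd|].
  apply Rmin_glb; [apply Hl; now left | apply IH; intros z Hz; apply Hl; now right].
Qed.

Lemma d_succ_le_term a n j : (1 <= j <= S n)%nat ->
  d a (S n) <= (INR (t a 0 j) + 1) / INR j.
Proof.
  intros Hj. unfold d; cbv beta iota zeta.
  destruct excluded_middle_informative; apply minl_le_In;
    apply (in_map (fun i => (INR (t a 0 i) + 1) / INR i)), in_seq; lia.
Qed.

Lemma d_succ_le_last a n : sigma_ge a 0 (S (S n)) ->
  d a (S n) <= INR (t a 0 (S (S n))) / INR (S (S n)).
Proof.
  intros Hs. unfold d; cbv beta iota zeta.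
  destruct excluded_middle_informative; [apply minl_le_default | contradiction].
Qed.

Lemma le_d_succ a n b :
  (forall j, (1 <= j <= S n)%nat -> b <= (INR (t a 0 j) + 1) / INR j) ->
  (sigma_ge a 0 (S (S n)) -> b <= INR (t a 0 (S (S n))) / INR (S (S n))) ->
  b <= d a (S n).
Proof.
  intros Hterm Hlast. unfold d; cbv beta iota zeta.
  assert (Hl : forall y, In y (map (fun j => (INR (t a 0 j) + 1) / INR j) (seq 1 (S n))) -> b <= y).
  { intros y Hy. apply in_map_iff in Hy. destruct Hy as (j & <- & Hj).
    apply in_seq in Hj. apply Hterm. lia. }
  destruct excluded_middle_informative as [Hs|Hs]; apply le_minl; auto.
  (* the default [(t_1 + 1) / 1] of the second branch is the term [j = 1] *)
  exact (Hterm 1%nat ltac:(lia)).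
Qed.

Theorem lemma3p2 (a : R) (Ha : 1/2 < a <= 2/3) :
  forall (x : R) (k n : nat),
    0 <= x < 1 ->
    (n = 0%nat \/ sigma_ge a 0 n) ->
    (k = 0%nat \/ sigma_ge a x k) ->
    INR (t a 0 1) <= d a n /\
    INR (t a x k) >= INR k * d a n - (if Nat.eqb n 0 then 0 else 1).
Proof.
  intros x k n Hx Hn Hk.
  assert (Ha0 : 0 < a) by lra.
  assert (Hsk : sigma_ge a x k) by (destruct Hk as [->|Hk]; [apply sigma_ge_0 | exact Hk]).
  assert (Ht1 : forall j y, 0 <= y < 1 -> sigma_ge a y j ->
                  INR j * INR (t a 0 1) <= INR (t a y j)).
  { intros j y Hy Hsj.
    enough (INR j * INR (t a 0 1) - 0 <= INR (t a y j)) by lra.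
    apply (return_time_lower_bound a Ha0 _ 0 0); auto; [lra | intros i Hi; lia | cbn; lra]. }
  destruct n as [|n]; cbn [Nat.eqb].
  - change (d a 0) with (INR (t a 0 1)). split; [lra|]. pose proof (Ht1 k x Hx Hsk). lra.
  - destruct Hn as [Hn|Hn]; [discriminate|]. split.
    + apply le_d_succ.
      * intros j Hj. apply Rle_div_iff; [apply lt_0_INR; lia|].
        pose proof (Ht1 j 0 ltac:(lra) (sigma_ge_le a 0 j (S n) Hn ltac:(lia))). lra.
      * intros Hs. apply Rle_div_iff; [apply lt_0_INR; lia|]. apply Ht1; [lra | exact Hs].
    + enough (INR k * d a (S n) - 1 <= INR (t a x k)) by lra.
      apply (return_time_lower_bound a Ha0 _ 1 (S n)); auto; [lra | |].
      * intros j Hj. apply Rle_div_iff; [apply lt_0_INR; lia|]. now apply d_succ_le_term.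
      * intros Hs. apply Rle_div_iff; [apply lt_0_INR; lia|]. now apply d_succ_le_last.
Qed.
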